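(* Let $S$ be a Rauzy scheme for a recurrent infinite word $W$, let $l$ be an admissible path in $S$ with $F(l)=u$, and let $u_1$ be a finite word with $uu_1\sqsubseteq W$. Then there is an admissible path $l'$ in $S$ such that $l$ is a prefix of $l'$ and $F(l')$ begins with $uu_1$. Symmetrically, if $u_1u\sqsubseteq W$, there is an admissible path $l'$ such that $l$ is a suffix of $l'$ and $F(l')$ ends with $u_1u$.
   Context: An infinite word $W$ is recurrent if every factor occurs infinitely often. $u\sqsubseteq w$: $u$ is a factor of $w$; $u\sqsubseteq_k w$: $u$ occurs in $w$ at least $k$ times. A graph with words is a strongly connected finite directed graph (multiple edges and loops allowed) in which every edge $e$ carries a front word $F(e)$ and a back word $B(e)$, and every vertex either has in-degree $1$ and out-degree $>1$ (distributing vertex) or in-degree $>1$ and out-degree $1$ (collecting vertex). A path is a finite nonempty sequence of edges $v_1\dots v_n$ with each $v_{i+1}$ starting where $v_i$ ends; subpaths, prefixes, suffixes and $s_1\sqsubseteq_k s_2$ are defined via edge records (the word $v_1\dots v_n$ over the alphabet of edges). A path is symmetric if its first edge starts at a collecting vertex and its last edge ends at a distributing vertex. For $s=v_1\dots v_n$, $F(s)$ is the concatenation, in order, of the front words of $v_1$ and of all $v_i$ ($i\ge2$) starting at a distributing vertex; $B(s)$ is the concatenation, in order, of the back words of all $v_i$ ($i\le n-1$) ending at a collecting vertex and of $v_n$. A Rauzy scheme for $W$ is a graph with words such that: (1) it has more than one edge; (2) front words of edges leaving a common distributing vertex have pairwise distinct first letters, and back words of edges entering a common collecting vertex have pairwise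 distinct last letters; (3) $F(s)=B(s)$ for every symmetric path $s$; (4) for symmetric paths $s_1,s_2$ and $k\ge1$, $F(s_1)\sqsubseteq_k F(s_2)$ implies $s_1\sqsubseteq_k s_2$; (5) all words on edges are factors of $W$; (6) every factor of $W$ is a factor of $F(s)$ for some symmetric path $s$; (7) for every edge $e$ there is a factor $u_e$ of $W$ such that every symmetric path $s$ with $u_e\sqsubseteq F(s)$ passes through $e$. A symmetric path $s$ is admissible if $F(s)\sqsubseteq W$. *)

From mathcomp Require Import all_boot.
Set Implicit Arguments. Unset Strict Implicit. Unset Printing Implicit Defensive.

Section Words.
Variable A : eqType.

Definition occurs_at (u : seq A) (W : nat -> A) (i : nat) : Prop :=
  mkseq (fun j => W (i + j)) (size u) = u.

Definition factor_inf (u : seq A) (W : nat -> A) : Prop :=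
  exists i, occurs_at u W i.

Definition recurrent (W : nat -> A) : Prop :=
  forall u, factor_inf u W -> forall N, exists i, N <= i /\ occurs_at u W i.
End Words.

(* number of occurrences of u in the finite word w (over any eqType);
   u ⊑_k w  iff  k <= occ u w,  and  u ⊑ w  iff  infix u w *)
Definition occ (T : eqType) (u w : seq T) : nat :=
  count (fun i => take (size u) (drop i w) == u) (iota 0 (size w - size u).+1).

Record graph_words (A : Type) := GraphWords {
  gV : finType;
  gE : finType;               (* edges (multiple edges / loops allowed) *)
  gsrc : gE -> gV;
  gtgt : gE -> gV;
  gfront : gE -> seq A;
  gback : gE -> seq A }.

Section Graph.
Variable A : eqType.
Variable G : graph_words A.

Definition indeg (v : gV G) : nat := #|[pred e | gtgt e == v]|.
Definition outdeg (v : gV G) : nat := #|[pred e | gsrc e == v]|.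
Definition distributing (v : gV G) : bool := (indeg v == 1) && (1 < outdeg v).
Definition collecting (v : gV G) : bool := (1 < indeg v) && (outdeg v == 1).

Definition adj : rel (gV G) := fun x y => [exists e, (gsrc e == x) && (gtgt e == y)].
Definition strongly_connected : Prop := forall x y, connect adj x y.

Definition is_graph_with_words : Prop :=
  strongly_connected /\ forall v, distributing v || collecting v.

Definition is_path (s : seq (gE G)) : Prop :=
  s <> [::] /\ sorted (fun e1 e2 => gtgt e1 == gsrc e2) s.

Definition symmetric (s : seq (gE G)) : Prop :=
  is_path s /\
  (match s with [::] => False
   | e :: s' => collecting (gsrc e) /\ distributing (gtgt (last e s')) end).

Definition Fw (s : seq (gE G)) : seq A :=
  match s with
  | [::] => [::]
  | e :: s' => gfront e ++ flatten [seq gfront e' | e' <- s' & distributing (gsrc e')]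
  end.

Definition Bw (s : seq (gE G)) : seq A :=
  match s with
  | [::] => [::]
  | e :: s' => flatten [seq gback e' | e' <- belast e s' & collecting (gtgt e')]
               ++ gback (last e s')
  end.

Definition rauzy_scheme (W : nat -> A) : Prop :=
  is_graph_with_words /\
  (* (1) *) 1 < #|gE G| /\
  (* (2) *) (forall e1 e2 : gE G, e1 != e2 -> gsrc e1 = gsrc e2 -> distributing (gsrc e1) ->
               exists a1 a2 w1 w2, gfront e1 = a1 :: w1 /\ gfront e2 = a2 :: w2 /\ a1 <> a2) /\
            (forall e1 e2 : gE G, e1 != e2 -> gtgt e1 = gtgt e2 -> collecting (gtgt e1) ->
               exists a1 a2 w1 w2, gback e1 = rcons w1 a1 /\ gback e2 = rcons w2 a2 /\ a1 <> a2) /\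
  (* (3) *) (forall s, symmetric s -> Fw s = Bw s) /\
  (* (4) *) (forall s1 s2 k, symmetric s1 -> symmetric s2 -> 1 <= k ->
               k <= occ (Fw s1) (Fw s2) -> k <= occ s1 s2) /\
  (* (5) *) (forall e : gE G, factor_inf (gfront e) W /\ factor_inf (gback e) W) /\
  (* (6) *) (forall u, factor_inf u W -> exists s, symmetric s /\ infix u (Fw s)) /\
  (* (7) *) (forall e : gE G, exists ue, factor_inf ue W /\
               forall s, symmetric s -> infix ue (Fw s) -> e \in s).

Definition admissible (W : nat -> A) (s : seq (gE G)) : Prop :=
  symmetric s /\ factor_inf (Fw s) W.
End Graph.

From Pilot Require Import Defs.
From mathcomp Require Import all_boot zify.
Set Implicit Arguments. Unset Strict Implicit. Unset Printing Implicit Defensive.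

(* Pad the
   occurrence of u u1 on the right by M letters of W, M bounding the lengths of
   the front words, and use axiom (6) to find a symmetric path s whose word
   contains it.  The lifting lemma [factor_lift] -- a consequence of axioms
   (3) and (4) -- shows that this occurrence of F(l) in F(s) comes from an
   occurrence of l in s, i.e. s = p l q with F(s) = Bhead p . F(l) . Ftail q.
   Cutting q at a suitable distributing vertex ([cut_tail]) yields l q1
   symmetric with F(l q1) = u Ftail(q1) and |u1| <= |Ftail q1| <= |u1| + M;
   hence F(l q1) starts with u u1 and is a prefix of the padded factor.
   The left extension is the mirror argument: the cut on the left is obtained
   from [cut_tail] in the reversed graph, and recurrence of W provides an
   occurrence of u1 u with room for the padding on the left. *)

Section Words.
Variable A : eqType.

Lemma prefix_of_common (a b c : seq A) :
  prefix a c -> prefix b c -> size a <= size b -> prefix a b.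
Proof.
rewrite !prefixE => /eqP Ha /eqP Hb Hab.
by rewrite -Hb take_takel // Ha.
Qed.

Lemma suffix_of_common (a b c : seq A) :
  suffix a c -> suffix b c -> size a <= size b -> suffix a b.
Proof.
rewrite -!prefix_rev => Ha Hb Hab.
by apply: prefix_of_common Ha Hb _; rewrite !size_rev.
Qed.

Lemma mkseqD (T : Type) (f : nat -> T) m n :
  mkseq f (m + n) = mkseq f m ++ mkseq (fun j => f (m + j)) n.
Proof.
by rewrite /mkseq iotaD map_cat add0n -[in iota m n](addn0 m) iotaDl -map_comp.
Qed.

Variable W : nat -> A.

Lemma occurs_at_cat u v i :
  occurs_at (u ++ v) W i <-> occurs_at u W i /\ occurs_at v W (i + size u).
Proof.
rewrite /occurs_at size_cat mkseqD.
have -> : mkseq (fun j => W (i + (size u + j))) (size v) =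
          mkseq (fun j => W (i + size u + j)) (size v).
  by apply: eq_mkseq => j; rewrite addnA.
split => [/eqP|[-> ->] //].
by rewrite eqseq_cat ?size_mkseq // => /andP [/eqP -> /eqP ->].
Qed.

Lemma factor_inf_infix u v : infix u v -> factor_inf v W -> factor_inf u W.
Proof.
move=> /infixP [a [b ->]] [i /occurs_at_cat [_ /occurs_at_cat [Hu _]]].
by exists (i + size a).
Qed.

Definition window j M : seq A := mkseq (fun k => W (j + k)) M.

Lemma occurs_at_window j M : occurs_at (window j M) W j.
Proof. by rewrite /occurs_at size_mkseq. Qed.
End Words.

Definition occ_pos (T : eqType) (u w : seq T) : seq nat :=
  [seq i <- iota 0 (size w - size u).+1 | take (size u) (drop i w) == u].

Lemma size_occ_pos (T : eqType) (u w : seq T) : size (occ_pos u w) = occ u w.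
Proof. exact: size_filter. Qed.

Lemma occ_posP (T : eqType) (u w : seq T) i :
  reflect (exists a b, size a = i /\ w = a ++ u ++ b) (i \in occ_pos u w).
Proof.
rewrite mem_filter mem_iota /=; apply: (iffP andP) => [[/eqP Hu Hi]|[a [b [<- ->]]]].
  exists (take i w), (drop (size u) (drop i w)); split.
    by rewrite size_takel //; lia.
  by rewrite -{1}Hu !cat_take_drop.
by rewrite drop_size_cat // take_size_cat // eqxx !size_cat; split => //; lia.
Qed.

Lemma occ_pos_split (T : eqType) (u w : seq T) i :
  i \in occ_pos u w -> w = take i w ++ u ++ drop (i + size u) w.
Proof.
case/occ_posP => [a [b [<- Ew]]].
by rewrite {2 3}Ew take_size_cat // addnC -drop_drop !drop_size_cat.
Qed.

Section Graph.
Variables (A : eqType) (G : graph_words A).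
Local Notation E := (gE G).

Definition consecutive : rel E := fun e1 e2 => gtgt e1 == gsrc e2.

(* The word appended to F when a path is extended on the right by q. *)
Definition Ftail (q : seq E) : seq A :=
  flatten [seq gfront e | e <- q & distributing (gsrc e)].

(* The word prepended to B when a path is extended on the left by p. *)
Definition Bhead (p : seq E) : seq A :=
  flatten [seq gback e | e <- p & collecting (gtgt e)].

Lemma Ftail_cat p q : Ftail (p ++ q) = Ftail p ++ Ftail q.
Proof. by rewrite /Ftail filter_cat map_cat flatten_cat. Qed.

Lemma Bhead_cat p q : Bhead (p ++ q) = Bhead p ++ Bhead q.
Proof. by rewrite /Bhead filter_cat map_cat flatten_cat. Qed.

Lemma Ftail_cons e q :
  Ftail (e :: q) = (if distributing (gsrc e) then gfront e else [::]) ++ Ftail q.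
Proof. by rewrite /Ftail /=; case: ifP. Qed.

Lemma Bhead_cons e p :
  Bhead (e :: p) = (if collecting (gtgt e) then gback e else [::]) ++ Bhead p.
Proof. by rewrite /Bhead /=; case: ifP. Qed.

Lemma Fw_cat p q : p != [::] -> Fw (p ++ q) = Fw p ++ Ftail q.
Proof. by case: p => // e p _ /=; rewrite -/(Ftail (p ++ q)) Ftail_cat catA. Qed.

Lemma Bw_cat p e q : Bw (p ++ e :: q) = Bhead p ++ Bw (e :: q).
Proof.
case: p => [|e1 p] //=.
by rewrite belast_cat last_cat /= -cat_rcons -lastI -/(Bhead _) Bhead_cat -catA.
Qed.

Lemma symmetricE (s : seq E) (x : E) : Defs.symmetric s <->
  [/\ s != [::], sorted consecutive s, collecting (gsrc (head x s))
    & distributing (gtgt (last x s))].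
Proof.
case: s => [|e s] /=; first by split => [[[]]|[]].
by split => [[[_ Hs] [Hc Hd]]|[_ Hs Hc Hd]].
Qed.

Lemma symmetric_nonnil (l : seq E) : Defs.symmetric l -> l != [::].
Proof. by case: l => // - [[]]. Qed.

Lemma symmetric_split (p l q : seq E) : Defs.symmetric (p ++ l ++ q) ->
  Defs.symmetric l -> Defs.symmetric (p ++ l) /\ Defs.symmetric (l ++ q).
Proof.
case: l => [|e l]; first by move=> _ [[]].
move/(symmetricE _ e) => [_ Hs Hc Hd] /(symmetricE _ e) [_ _ Hlc Hld].
have [_ Hlq] := cat_sorted2 Hs.
rewrite catA in Hs; have [Hpl _] := cat_sorted2 Hs.
split; apply/(symmetricE _ e); split => //.
- by case: p Hc {Hs Hpl Hd}.
- by case: p Hc {Hs Hpl Hd}.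
- by rewrite last_cat.
- by move: Hd; rewrite !last_cat.
Qed.

(* Axiom (2) at a collecting vertex: its (at least two) incoming back words
   end with pairwise distinct letters, so each of them is nonempty. *)
Lemma collecting_back_nonempty :
  (forall e1 e2 : E, e1 != e2 -> gtgt e1 = gtgt e2 -> collecting (gtgt e1) ->
     exists a1 a2 w1 w2, gback e1 = rcons w1 a1 /\ gback e2 = rcons w2 a2 /\ a1 <> a2) ->
  forall e : E, collecting (gtgt e) -> 0 < size (gback e).
Proof.
move=> back_distinct e Hc.
case: (pickP (fun e2 => (gtgt e2 == gtgt e) && (e2 != e))) => [e2 /andP [He2 Hne]|none].
  have [a1 [_ [w1 [_ [-> _]]]]] := back_distinct e e2 ltac:(by rewrite eq_sym) (esym (eqP He2)) Hc.
  by rewrite size_rcons.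
have : #|[pred e2 | gtgt e2 == gtgt e]| <= #|pred1 e|.
  apply: subset_leq_card; apply/subsetP => e2; rewrite !inE => He2.
  by move: (none e2); rewrite /= He2 => /negbFE.
by move: Hc; rewrite /collecting /indeg card1 => /andP [Hc _]; lia.
Qed.
End Graph.
Arguments consecutive {A G}.

Section FactorLift.
Variables (A : eqType) (G : graph_words A).
Local Notation E := (gE G).
Hypothesis FB : forall s : seq E, Defs.symmetric s -> Fw s = Bw s.
Hypothesis occ_transfer : forall (s1 s2 : seq E) k,
  Defs.symmetric s1 -> Defs.symmetric s2 -> 1 <= k ->
  k <= occ (Fw s1) (Fw s2) -> k <= occ s1 s2.
Hypothesis back_pos : forall e : E, collecting (gtgt e) -> 0 < size (gback e).

(* Around a symmetric subpath l, the word F(p l q) splits as B-head of p,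
   F(l), F-tail of q: left of l use F = B, right of l the definition of F. *)
Lemma Fw_decomp (p l q : seq E) : Defs.symmetric (p ++ l ++ q) -> Defs.symmetric l ->
  Fw (p ++ l ++ q) = Bhead p ++ Fw l ++ Ftail q.
Proof.
move=> Hs Hl; have [Hpl _] := symmetric_split Hs Hl.
case: l Hl Hs Hpl => [[[]]|e l] // Hl Hs Hpl.
rewrite catA Fw_cat; last by case: p {Hs Hpl}.
by rewrite FB // Bw_cat -FB // catA.
Qed.

(* A nonempty path leading into a symmetric path ends at a collecting vertex,
   so its B-head is nonempty. *)
Lemma Bhead_pos (d l : seq E) : sorted consecutive (d ++ l) -> Defs.symmetric l ->
  d != [::] -> 0 < size (Bhead d).
Proof.
case/lastP: d => [//|d z] + + _; case: l => [_ [_ []]|e l].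
rewrite cat_rcons => /cat_sorted2 [_ /= /andP [/eqP Hze _]].
move/(symmetricE _ e) => [_ _ /= Hc _].
have Hz : collecting (gtgt z) by rewrite Hze.
by rewrite -cats1 Bhead_cat Bhead_cons Hz !size_cat; have := back_pos Hz; lia.
Qed.

(* The map sending an occurrence of l at position i to
   the occurrence of F(l) at position |Bhead (take i s)| is strictly
   increasing, and by axiom (4) there are no more occurrences of F(l) in F(s)
   than of l in s, so this map is onto. *)
Lemma factor_lift (s l : seq E) a b : Defs.symmetric s -> Defs.symmetric l ->
  Fw s = a ++ Fw l ++ b -> exists p q, [/\ s = p ++ l ++ q, Bhead p = a & Ftail q = b].
Proof.
move=> Hs Hl Hfs.
pose f i := size (Bhead (take i s)).
have decompF i : i \in occ_pos l s ->
    Fw s = Bhead (take i s) ++ Fw l ++ Ftail (drop (i + size l) s).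
  by move=> Hi; rewrite {1}(occ_pos_split Hi) Fw_decomp -?(occ_pos_split Hi).
have f_sub : {subset map f (occ_pos l s) <= occ_pos (Fw l) (Fw s)}.
  move=> _ /mapP [i Hi ->]; apply/occ_posP.
  by exists (Bhead (take i s)), (Ftail (drop (i + size l) s)); rewrite -decompF.
have f_incr i j : i \in occ_pos l s -> j \in occ_pos l s -> i < j -> f i < f j.
  move=> Hi Hj Hij.
  have Hjs : j <= size s by case/occ_posP: Hj => [x [y [<- ->]]]; rewrite size_cat leq_addr.
  set d := drop i (take j s).
  have Etj : take j s = take i s ++ d.
    by rewrite -{1}(cat_take_drop i (take j s)) take_takel // ltnW.
  have Hd : d != [::] by rewrite -size_eq0 size_drop size_takel //; lia.
  have Hsrt : sorted consecutive (d ++ l).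
    have : sorted consecutive s by case: Hs => [[]].
    rewrite {1}(occ_pos_split Hj) Etj -catA => /cat_sorted2 [_].
    by rewrite catA => /cat_sorted2 [].
  by rewrite /f Etj Bhead_cat size_cat -addn1 leq_add2l (Bhead_pos Hsrt Hl Hd).
have f_uniq : uniq (map f (occ_pos l s)).
  rewrite map_inj_in_uniq ?filter_uniq ?iota_uniq // => i j Hi Hj Hij.
  by case: (ltngtP i j) => // [/(f_incr _ _ Hi Hj)|/(f_incr _ _ Hj Hi)]; rewrite Hij ltnn.
have a_pos : size a \in occ_pos (Fw l) (Fw s) by apply/occ_posP; exists a, b.
have few_F_occ : size (occ_pos (Fw l) (Fw s)) <= size (map f (occ_pos l s)).
  rewrite size_map !size_occ_pos; apply: occ_transfer => //.
  by rewrite -size_occ_pos; case: (occ_pos _ _) a_pos.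
have [_ f_onto] := uniq_min_size f_uniq f_sub few_F_occ.
move: a_pos; rewrite -f_onto => /mapP [i Hi Hai].
have := decompF i Hi; rewrite Hfs => /eqP; rewrite eqseq_cat; last exact: Hai.
rewrite eqseq_cat // => /andP [/eqP Ha /andP [_ /eqP Hb]].
by exists (take i s), (drop (i + size l) s); split; first exact: occ_pos_split.
Qed.
End FactorLift.

Section Cut.
Variables (A : eqType) (G : graph_words A) (M : nat).
Local Notation E := (gE G).
Hypothesis front_le : forall e : E, size (gfront e) <= M.

Lemma reach_distributing (x : E) q : path consecutive x q ->
  distributing (gtgt (last x q)) ->
  exists k, distributing (gtgt (last x (take k q))) /\ Ftail (take k q) = [::].
Proof.
elim: q x => [|e q IH] x /=; first by exists 0.
move=> /andP [/eqP xe Hq] Hd; case: (boolP (distributing (gtgt x))) => Hx.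
  by exists 0.
have [k [Hk Hnil]] := IH e Hq Hd.
by exists k.+1; rewrite /= Ftail_cons -xe (negbTE Hx).
Qed.

Lemma cut_path (x : E) q n : path consecutive x q ->
  distributing (gtgt (last x q)) -> n <= size (Ftail q) ->
  exists k, [/\ distributing (gtgt (last x (take k q))),
    n <= size (Ftail (take k q)) & size (Ftail (take k q)) <= n + M].
Proof.
case: (posnP n) => [-> Hq Hd _|].
  by have [k [Hk Hnil]] := reach_distributing Hq Hd; exists k; rewrite Hnil.
elim: q x n => [|e q IH] x n n_gt0 /=; first by move=> _ _; lia.
move=> /andP [/eqP xe Hq] Hd; rewrite Ftail_cons -xe.
case: (boolP (distributing (gtgt x))) => Hx /=; last first.
  move=> Hn; have [k [K1 K2 K3]] := IH e n n_gt0 Hq Hd Hn.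
  by exists k.+1; rewrite /= Ftail_cons -xe (negbTE Hx).
rewrite size_cat => Hn; case: (leqP n (size (gfront e))) => Hle.
  have [k [Hk Hnil]] := reach_distributing Hq Hd.
  exists k.+1; rewrite /= Ftail_cons -xe Hx Hnil cats0; split => //.
  by have := front_le e; lia.
have [k [K1 K2 K3]] := IH e (n - size (gfront e)) ltac:(lia) Hq Hd ltac:(lia).
by exists k.+1; rewrite /= Ftail_cons -xe Hx size_cat; split => //; lia.
Qed.

Lemma cut_tail (l q : seq E) n : l != [::] -> Defs.symmetric (l ++ q) ->
  n <= size (Ftail q) -> exists q1 q2, [/\ q = q1 ++ q2, Defs.symmetric (l ++ q1),
    n <= size (Ftail q1) & size (Ftail q1) <= n + M].
Proof.
case: l => [//|e l] _ /(symmetricE _ e) [_ /= Hs Hc Hd] Hn.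
rewrite cat_path in Hs; case/andP: Hs => Hl Hq; rewrite last_cat in Hd.
have [k [K1 K2 K3]] := cut_path Hq Hd Hn.
exists (take k q), (drop k q); split => //; first by rewrite cat_take_drop.
by apply/(symmetricE _ e); split => //=; rewrite ?cat_path ?Hl ?take_path // last_cat.
Qed.
End Cut.

Definition dual_graph (A : eqType) (G : graph_words A) : graph_words A :=
  @GraphWords A (gV G) (gE G) (@gtgt A G) (@gsrc A G)
    (fun e => rev (gback e)) (fun e => rev (gfront e)).

Section Duality.
Variables (A : eqType) (G : graph_words A).
Local Notation E := (gE G).
Local Notation G' := (dual_graph G).

Lemma dual_distributing (v : gV G) : @distributing A G' v = collecting v.
Proof. by rewrite /distributing andbC. Qed.

Lemma dual_collecting (v : gV G) : @collecting A G' v = distributing v.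
Proof. by rewrite /collecting andbC. Qed.

Lemma dual_Ftail (p : seq E) : @Ftail A G' (rev p) = rev (Bhead p).
Proof.
elim: p => [//|e p IH].
rewrite rev_cons -cats1 Ftail_cat IH Bhead_cons rev_cat Ftail_cons /= dual_distributing.
by case: ifP; rewrite ?cats0.
Qed.

Lemma head_rev (x : E) s : head x (rev s) = last x s.
Proof. by case/lastP: s => // s y; rewrite rev_rcons last_rcons. Qed.

Lemma last_rev (x : E) s : last x (rev s) = head x s.
Proof. by case: s => // y s; rewrite rev_cons last_rcons. Qed.

Lemma dual_symmetric (s : seq E) : @Defs.symmetric A G' (rev s) <-> Defs.symmetric s.
Proof.
case: s => [|e s]; first by split => [[[]]|[[]]].
rewrite (symmetricE (G := G') _ e) (symmetricE _ e) head_rev last_rev.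
rewrite dual_collecting dual_distributing rev_sorted.
have -> : sorted (fun y x : E => @consecutive A G' x y) (e :: s) = sorted consecutive (e :: s).
  by apply: eq_path => x y; rewrite /consecutive /= eq_sym.
by split => [[_ Hs Hc Hd]|[_ Hs Hc Hd]]; split; rewrite // -size_eq0 size_rev.
Qed.

Lemma cut_head M (l p : seq E) n : (forall e : E, size (gback e) <= M) ->
  l != [::] -> Defs.symmetric (p ++ l) -> n <= size (Bhead p) ->
  exists p1 p2, [/\ p = p1 ++ p2, Defs.symmetric (p2 ++ l),
    n <= size (Bhead p2) & size (Bhead p2) <= n + M].
Proof.
move=> back_le Hl Hpl Hn.
have front_le (e : E) : size (@gfront A G' e) <= M by rewrite size_rev.
have Hl' : rev l != [::] by rewrite -size_eq0 size_rev size_eq0.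
have Hpl' : @Defs.symmetric A G' (rev l ++ rev p) by rewrite -rev_cat; apply/dual_symmetric.
have Hn' : n <= size (@Ftail A G' (rev p)) by rewrite dual_Ftail size_rev.
have [q1 [q2 [Ep Hsym K1 K2]]] := @cut_tail A G' M front_le _ _ _ Hl' Hpl' Hn'.
rewrite -[q1]revK dual_Ftail size_rev in K1 K2.
exists (rev q2), (rev q1); split => //.
- by rewrite -rev_cat -Ep revK.
- by apply/dual_symmetric; rewrite rev_cat revK.
Qed.
End Duality.

Section Extension.
Variables (A : eqType) (W : nat -> A) (G : graph_words A).
Local Notation E := (gE G).
Hypothesis FB : forall s : seq E, Defs.symmetric s -> Fw s = Bw s.
Hypothesis occ_transfer : forall (s1 s2 : seq E) k,
  Defs.symmetric s1 -> Defs.symmetric s2 -> 1 <= k ->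
  k <= occ (Fw s1) (Fw s2) -> k <= occ s1 s2.
Hypothesis back_pos : forall e : E, collecting (gtgt e) -> 0 < size (gback e).
Hypothesis complete : forall u, factor_inf u W ->
  exists s : seq E, Defs.symmetric s /\ infix u (Fw s).

(* Right extension: pad the occurrence of F(l) u1 with M letters of W, lift
   it to a symmetric path s = p l q, and cut q after F-tail length |u1|. *)
Lemma extend_right (l : seq E) u1 : admissible W l -> factor_inf (Fw l ++ u1) W ->
  exists l' : seq E, admissible W l' /\ prefix l l' /\ prefix (Fw l ++ u1) (Fw l').
Proof.
move=> [Hl _] [i Hi].
pose M := \max_(e : E) size (gfront e).
have front_le (e : E) : size (gfront e) <= M by apply: leq_bigmax.
pose z := window W (i + size (Fw l ++ u1)) M.
have Hz : occurs_at (Fw l ++ u1 ++ z) W i.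
  by rewrite catA; apply/occurs_at_cat; split => //; apply: occurs_at_window.
have [s [Hs /infixP [a [b Hfs]]]] := complete (ex_intro _ i Hz).
have [p [q [Es _ Hq]]] := factor_lift FB occ_transfer back_pos (b := u1 ++ z ++ b) Hs Hl
  ltac:(by rewrite Hfs -!catA).
rewrite Es in Hs; have [_ Hlq] := symmetric_split Hs Hl.
have [q1 [q2 [Eq Hlq1 K1 K2]]] := cut_tail front_le (n := size u1) (symmetric_nonnil Hl) Hlq
  ltac:(by rewrite Hq size_cat leq_addr).
have Hq12 : Ftail q1 ++ Ftail q2 = u1 ++ z ++ b by rewrite -Ftail_cat -Eq.
have u1_pre : prefix u1 (Ftail q1).
  apply: (@prefix_of_common _ _ _ (u1 ++ z ++ b)) => //; first exact: prefix_prefix.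
  by rewrite -Hq12 prefix_prefix.
have q1_pre : prefix (Ftail q1) (u1 ++ z).
  apply: (@prefix_of_common _ _ _ (u1 ++ z ++ b)); first by rewrite -Hq12 prefix_prefix.
    by rewrite catA prefix_prefix.
  by rewrite size_cat size_mkseq.
have Fl' : Fw (l ++ q1) = Fw l ++ Ftail q1 by rewrite Fw_cat // symmetric_nonnil.
exists (l ++ q1); split; [split|split] => //.
- rewrite Fl'; apply: factor_inf_infix (ex_intro _ i Hz); apply: prefixW.
  by rewrite prefix_catr // eqxx.
- exact: prefix_prefix.
- by rewrite Fl' prefix_catr // eqxx.
Qed.

(* Left extension: the mirror argument.  Since W is one-sided, recurrence is
   used to find an occurrence of u1 F(l) preceded by M letters of W. *)
Lemma extend_left (l : seq E) u1 : recurrent W -> admissible W l ->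
  factor_inf (u1 ++ Fw l) W ->
  exists l' : seq E, admissible W l' /\ suffix l l' /\ suffix (u1 ++ Fw l) (Fw l').
Proof.
move=> rec [Hl _] Hf.
pose M := \max_(e : E) size (gback e).
have back_le (e : E) : size (gback e) <= M by apply: leq_bigmax.
have [i [Mi Hi]] := rec _ Hf M.
pose z := window W (i - M) M.
have Hz : occurs_at (z ++ u1 ++ Fw l) W (i - M).
  by apply/occurs_at_cat; rewrite size_mkseq subnK //; split => //; apply: occurs_at_window.
have [s [Hs /infixP [a [b Hfs]]]] := complete (ex_intro _ _ Hz).
have [p [q [Es Hp _]]] := factor_lift FB occ_transfer back_pos (a := a ++ z ++ u1) Hs Hl
  ltac:(by rewrite Hfs -!catA).
rewrite Es in Hs; have [Hpl _] := symmetric_split Hs Hl.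
have [p1 [p2 [Ep Hp2l K1 K2]]] := cut_head (n := size u1) back_le (symmetric_nonnil Hl) Hpl
  ltac:(by rewrite Hp !size_cat; lia).
have Hp12 : Bhead p1 ++ Bhead p2 = (a ++ z) ++ u1 by rewrite -Bhead_cat -Ep Hp -!catA.
have u1_suf : suffix u1 (Bhead p2).
  apply: (@suffix_of_common _ _ _ ((a ++ z) ++ u1)) => //; first exact: suffix_suffix.
  by rewrite -Hp12 suffix_suffix.
have p2_suf : suffix (Bhead p2) (z ++ u1).
  apply: (@suffix_of_common _ _ _ ((a ++ z) ++ u1)); first by rewrite -Hp12 suffix_suffix.
    by rewrite -catA suffix_suffix.
  by rewrite size_cat size_mkseq addnC.
have Fl' : Fw (p2 ++ l) = Bhead p2 ++ Fw l.
  by have := Fw_decomp FB (p := p2) (l := l) (q := [::]); rewrite !cats0; apply.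
exists (p2 ++ l); split; [split|split] => //.
- rewrite Fl'; apply: factor_inf_infix (ex_intro _ _ Hz); apply: suffixW.
  by rewrite catA suffix_catl // eqxx.
- exact: suffix_suffix.
- by rewrite Fl' suffix_catl // eqxx.
Qed.
End Extension.

Theorem lemma3p5 (A : eqType) (W : nat -> A) (G : graph_words A)
    (l : seq (gE G)) (u1 : seq A) :
  recurrent W -> rauzy_scheme G W -> admissible W l ->
  (factor_inf (Fw l ++ u1) W ->
     exists l' : seq (gE G), admissible W l' /\ prefix l l' /\ prefix (Fw l ++ u1) (Fw l')) /\
  (factor_inf (u1 ++ Fw l) W ->
     exists l' : seq (gE G), admissible W l' /\ suffix l l' /\ suffix (u1 ++ Fw l) (Fw l')).
Proof.
move=> rec [_ [_ [_ [back_distinct [FB [occ_transfer [_ [complete _]]]]]]]] Hl.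
have back_pos := collecting_back_nonempty back_distinct.
split; [exact: extend_right | exact: extend_left].
Qed.
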